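(* Let $n,m,k,t\ge 1$ and $r\ge 0$ be integers with $m=\lceil k/t\rceil + r$ and $n\ge tm$. Then the minimum total storage of an ${\sf ECBC}(n,m,k,t,r)$ is $$N(n,m,k,t,r)=m\bigl(n-t(m-r-1)\bigr)=tm(r+1)+m(n-tm).$$
   Context: An Erasure Combinatorial Batch Code ${\sf ECBC}(n,m,k,t,r)$ is a family of $m$ subsets $S_1,\dots,S_m$ (the contents of $m$ servers) of the file set $X=\{1,\dots,n\}$ such that for every subset $X'\subseteq X$ with $|X'|\le k$ and every subset $J\subseteq\{1,\dots,m\}$ with $|J|\ge m-r$, there exist subsets $C_j\subseteq S_j$ ($j\in J$) with $|C_j|\le t$ and $X'=\bigcup_{j\in J}C_j$. Its total storage is $N=\sum_{i=1}^m|S_i|$, and $N(n,m,k,t,r)$ denotes the minimum total storage over all ${\sf ECBC}(n,m,k,t,r)$. *)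

(* Files X = {1..n} are modelled by 'I_n, servers by 'I_m. *)
From mathcomp Require Import all_boot.
Set Implicit Arguments. Unset Strict Implicit. Unset Printing Implicit Defensive.

Definition is_ECBC (n m k t r : nat) (S : 'I_m -> {set 'I_n}) : Prop :=
  forall (X' : {set 'I_n}) (J : {set 'I_m}),
    #|X'| <= k -> m - r <= #|J| ->
    exists C : 'I_m -> {set 'I_n},
      (forall j, j \in J -> C j \subset S j /\ #|C j| <= t) /\
      X' = \bigcup_(j in J) C j.

Definition storage (n m : nat) (S : 'I_m -> {set 'I_n}) : nat :=
  \sum_(i < m) #|S i|.

Definition is_min_storage (n m k t r N : nat) : Prop :=
  (exists S : 'I_m -> {set 'I_n}, is_ECBC k t r S /\ storage S = N) /\
  (forall S : 'I_m -> {set 'I_n}, is_ECBC k t r S -> N <= storage S).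

Definition ceil_div (a b : nat) : nat := (a + b.-1) %/ b.

(* Lower bound: if server i misses more than t(m-r-1) files, a batch of
   t(m-r-1)+1 of them, requested while only i and m-r-1 other servers are
   available, cannot be served, since those other servers return at most
   t(m-r-1) files; so every server stores at least n - t(m-r-1) files.
   Upper bound: split the first tm files into m blocks of t files, store block g
   on the r+1 cyclically consecutive servers g, ..., g+r, and the remaining
   n - tm files on every server.  Serving a request is matching the requested
   files into the t slots of each available server, and Hall's condition holds:
   a set Y of requested files hitting fewer than m-r available servers lies in
   blocks whose whole window of r+1 servers is inside the set W of hit or
   unavailable servers, and a proper subset W of the cycle contains at most
   |W| - r such windows. *)

From mathcomp Require Import all_boot ssralg zmodp zify.
Import GRing.Theory.

Set Implicit Arguments.
Unset Strict Implicit.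
Unset Printing Implicit Defensive.

Lemma exists_subset_card (T : finType) (A : {set T}) K :
  K <= #|A| -> exists2 B : {set T}, B \subset A & #|B| = K.
Proof.
case/card_geqP => s [uniq_s size_s sA]; exists [set x in s].
  by apply/subsetP => x; rewrite inE => /sA.
by rewrite cardsE (card_uniqP uniq_s).
Qed.

Lemma leq_card_bigcup (I T : finType) (J : {set I}) (C : I -> {set T}) :
  #|\bigcup_(j in J) C j| <= \sum_(j in J) #|C j|.
Proof.
elim/big_rec2: _ => [|j U s _ IH]; first by rewrite cards0.
by apply: leq_trans (leq_card_setU _ _) _; rewrite leq_add2l.
Qed.

Lemma card_ord_leq N K : K <= N -> #|[set d : 'I_N.+1 | d <= K]| = K.+1.
Proof.
move=> le_KN; rewrite -sum1_card (eq_bigl (fun d : 'I_N.+1 => d <= K)) => [|d].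
  by rewrite (big_ord_narrow_leq le_KN) sum1_card card_ord.
by rewrite inE.
Qed.

Lemma ecbc_server_lower_bound n m k t r (S : 'I_m -> {set 'I_n}) :
  is_ECBC k t r S -> t * (m - r - 1) < k -> r < m ->
  forall i, n - t * (m - r - 1) <= #|S i|.
Proof.
move=> ecbcS lt_k lt_rm i; rewrite leqNgt; apply/negP => small_i.
have [X sXC cardX] : exists2 X : {set 'I_n}, X \subset ~: S i & #|X| = (t * (m - r - 1)).+1.
  by apply: exists_subset_card; have := cardsC (S i); rewrite card_ord; lia.
have [J0 sJ0 cardJ0] : exists2 J0 : {set 'I_m}, J0 \subset [set~ i] & #|J0| = m - r - 1.
  by apply: exists_subset_card; rewrite cardsC1 card_ord; lia.
have iJ0 : i \notin J0 by apply/negP => /(subsetP sJ0); rewrite !inE eqxx.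
have le_Xk : #|X| <= k by rewrite cardX.
have le_J : m - r <= #|i |: J0| by rewrite cardsU1 iJ0 cardJ0; lia.
have [C [capC defX]] := ecbcS X _ le_Xk le_J.
have Ci0 : #|C i| = 0.
  apply/eqP; rewrite cards_eq0 -subset0; apply/subsetP => x xCi.
  have [sCS _] := capC i (setU11 _ _).
  have : x \in X by rewrite defX; apply/bigcupP; exists i; rewrite ?setU11.
  by move/(subsetP sXC); rewrite inE (subsetP sCS).
have := leq_card_bigcup (i |: J0) C; rewrite -defX big_setU1 //= Ci0 cardX.
have : \sum_(j in J0) #|C j| <= \sum_(j in J0) t.
  by apply: leq_sum => j jJ0; case: (capC j); rewrite // inE jJ0 orbT.
by rewrite sum_nat_const cardJ0 mulnC add0n => le_sum /leq_trans /(_ le_sum); rewrite ltnn.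
Qed.

Lemma ecbc_storage_lower_bound n m k t r (S : 'I_m -> {set 'I_n}) :
  is_ECBC k t r S -> t * (m - r - 1) < k -> r < m ->
  m * (n - t * (m - r - 1)) <= storage S.
Proof.
move=> ecbcS lt_k lt_rm; rewrite /storage -[m in m * _]card_ord -sum_nat_const.
by apply: leq_sum => i _; apply: ecbc_server_lower_bound ecbcS lt_k lt_rm i.
Qed.

Section HallMarriage.

Variables L R : finType.
Implicit Types (adj : L -> {set R}) (A S : {set L}) (f : L -> R).

Definition nbh adj S : {set R} := \bigcup_(x in S) adj x.

Definition hall_condition adj A := forall S, S \subset A -> #|S| <= #|nbh adj S|.

Definition matching adj A f := {in A, forall x, f x \in adj x} /\ {in A &, injective f}.

Lemma nbh_setD adj (B : {set R}) S : nbh (fun x => adj x :\: B) S = nbh adj S :\: B.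
Proof.
apply/setP => y; rewrite inE; apply/bigcupP/andP => [[x xS]|[yB /bigcupP[x xS yx]]].
  by rewrite inE => /andP[yB yx]; split=> //; apply/bigcupP; exists x.
by exists x; rewrite // inE yB.
Qed.

Lemma hall_setD_tight adj A S0 :
  hall_condition adj A -> S0 \subset A -> #|nbh adj S0| <= #|S0| ->
  hall_condition (fun x => adj x :\: nbh adj S0) (A :\: S0).
Proof.
move=> hallA sS0A tightS0 S; rewrite subsetD => /andP[sSA disSS0].
rewrite nbh_setD cardsD.
have := hallA (S :|: S0); rewrite subUset sSA sS0A => /(_ isT).
rewrite /nbh bigcup_setU -/(nbh adj S) -/(nbh adj S0) cardsU cardsU.
rewrite (disjoint_setI0 disSS0) cards0 subn0.
have := subset_leq_card (subsetIl (nbh adj S) (nbh adj S0)).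
lia.
Qed.

Lemma hall_setD1_slack adj A a y :
  a \in A -> (forall S, S \proper A -> S != set0 -> #|S| < #|nbh adj S|) ->
  hall_condition (fun x => adj x :\ y) (A :\ a).
Proof.
move=> aA slackA S sSAa; rewrite nbh_setD.
have [->|nzS] := eqVneq S set0; first by rewrite cards0.
have pSA : S \proper A.
  apply/properP; split; first exact: subset_trans sSAa (subsetDl _ _).
  by exists a => //; apply: contraL aA => /(subsetP sSAa); rewrite !inE eqxx.
have := slackA S pSA nzS; rewrite (cardsD1 y (nbh adj S)); case: (_ \in _) => /=; lia.
Qed.

Lemma matching_glue adj (B : {set R}) A1 A2 f1 f2 :
  matching adj A1 f1 -> matching (fun x => adj x :\: B) A2 f2 ->
  {in A1, forall x, f1 x \in B} ->
  matching adj (A1 :|: A2) (fun x => if x \in A1 then f1 x else f2 x).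
Proof.
move=> [f1adj f1inj] [f2adj f2inj] f1B.
have f2nB x : x \in A2 -> f2 x \notin B by move/f2adj; rewrite inE => /andP[].
split=> [x|x z]; rewrite !inE.
  by case: ifP => [/f1adj //|_ /= xA2]; have := f2adj x xA2; rewrite inE => /andP[].
case: ifP => [xA1|_] /= xA2; case: ifP => [zA1|_] /= zA2.
- exact: f1inj.
- by move=> exz; have := f2nB z zA2; rewrite -exz f1B.
- by move=> exz; have := f2nB x xA2; rewrite exz f1B.
- exact: f2inj.
Qed.

Theorem hall_marriage adj A (r0 : R) : hall_condition adj A -> exists f, matching adj A f.
Proof.
(* Either some nonempty proper S0 is tight: match S0 into nbh S0 and A \ S0
   outside it; or all have surplus, and any edge (a, y) can be committed to. *)
elim: {A}_.+1 {-2}A (ltnSn #|A|) adj => // N IH A ltAN adj hallA.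
have [->|[a aA]] := set_0Vmem A; first by exists (fun=> r0); split=> x; rewrite inE.
have [/existsP[S0 /and3P[pS0A nzS0 tightS0]]|] :=
  boolP [exists S0 : {set L}, [&& S0 \proper A, S0 != set0 & #|nbh adj S0| <= #|S0|]].
  have sS0A := proper_sub pS0A.
  have [f1 m1] := IH S0 (leq_trans (proper_card pS0A) ltAN) adj
    (fun S sS => hallA S (subset_trans sS sS0A)).
  have ltA2 : #|A :\: S0| < N.
    by move: nzS0 ltAN (subset_leq_card sS0A); rewrite cardsDS // -card_gt0; lia.
  have [f2 m2] := IH _ ltA2 _ (hall_setD_tight hallA sS0A tightS0).
  exists (fun x => if x \in S0 then f1 x else f2 x).
  rewrite -(setIidPr sS0A) -{1}(setID A S0) (setIidPr sS0A).
  apply: (matching_glue m1 m2) => x xS0.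
  by apply/bigcupP; exists x => //; case: m1 => /(_ x xS0).
rewrite negb_exists => /forallP noTight.
have [y ya] : exists y, y \in adj a.
  have := hallA [set a]; rewrite sub1set aA /nbh big_set1 cards1 => /(_ isT).
  by rewrite card_gt0 => /set0Pn.
have slackA S : S \proper A -> S != set0 -> #|S| < #|nbh adj S|.
  by move=> pSA nzS; have := noTight S; rewrite pSA nzS ltnNge.
have ltA2 : #|A :\ a| < N by move: ltAN; rewrite (cardsD1 a A) aA.
have [f2 m2] := IH _ ltA2 _ (hall_setD1_slack y aA slackA).
exists (fun x => if x \in [set a] then y else f2 x); rewrite -(setD1K aA).
apply: matching_glue m2 _ => [|x]; last by rewrite !inE.
by split=> [x|x z]; rewrite !inE => /eqP-> // /eqP->.
Qed.

End HallMarriage.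

Section CapacitatedCover.

Variables (I T : finType) (S : I -> {set T}) (t : nat).

Definition hitting_servers (J : {set I}) (Y : {set T}) : {set I} :=
  [set j in J | [exists y in Y, y \in S j]].

Lemma capacitated_cover (i0 : I) (J : {set I}) (X : {set T}) : 0 < t ->
  (forall Y : {set T}, Y \subset X -> #|Y| <= #|hitting_servers J Y| * t) ->
  exists C : I -> {set T},
    (forall j, j \in J -> C j \subset S j /\ #|C j| <= t) /\ X = \bigcup_(j in J) C j.
Proof.
move=> t_gt0 hallX.
(* Hall's theorem for the files of X against the pairs (server of J, slot < t). *)
pose adj x := [set js : I * 'I_t | (js.1 \in J) && (x \in S js.1)].
have nbh_adj Y : nbh adj Y = setX (hitting_servers J Y) [set: 'I_t].
  apply/setP => -[j s]; rewrite !inE andbT; apply/bigcupP/andP.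
    case=> y yY; rewrite inE => /andP[jJ ySj]; split=> //.
    by apply/existsP; exists y; rewrite yY.
  by case=> jJ /exists_inP[y yY ySj]; exists y; rewrite // inE jJ.
have [|f [fadj finj]] := hall_marriage (i0, Ordinal t_gt0) (A := X) (adj := adj).
  by move=> Y sYX; rewrite nbh_adj cardsX cardsT card_ord; exact: hallX.
exists (fun j => [set x in X | (f x).1 == j]); split=> [j jJ|].
  split.
    apply/subsetP => x; rewrite inE => /andP[/fadj + /eqP <-].
    by rewrite inE => /andP[].
  have slot_inj : {in [set x in X | (f x).1 == j] &, injective (fun x => (f x).2)}.
    move=> x z; rewrite !inE => /andP[xX /eqP fx1] /andP[zX /eqP fz1] fx2.
    by apply: finj => //; rewrite [f x]surjective_pairing [f z]surjective_pairing fx1 fz1 fx2.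
  by rewrite -(card_in_imset slot_inj) -[t in _ <= t]card_ord max_card.
apply/setP => x; apply/idP/bigcupP => [xX|[j _]]; last by rewrite inE => /andP[].
by exists (f x).1; [have := fadj x xX; rewrite inE => /andP[] | rewrite inE xX eqxx].
Qed.

End CapacitatedCover.

Section CyclicArcs.

Variable p : nat.
Implicit Types (A W : {set 'I_p.+1}) (x d : 'I_p.+1).

Lemma Zp_succ_closed A a : a \in A -> {in A, forall x, x + Zp1 \in A}%R -> A = setT.
Proof.
move=> aA succA; have iterA k : (a + Zp1 *+ k)%R \in A.
  by elim: k => [|k IHk]; rewrite ?mulr0n ?addr0 // mulrSr addrA succA.
apply/setP => y; rewrite inE; have := iterA (y - a)%R.
by rewrite [(Zp1 *+ _)%R](Zp1_expgz (y - a)%R) addrC subrK.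
Qed.

Lemma leq_val_addZp1 x : val (x + Zp1)%R <= x.+1.
Proof. by rewrite /= (leq_trans (leq_mod _ _)) //; have := leq_mod 1 p.+1; lia. Qed.

Definition arc_starts W r : {set 'I_p.+1} :=
  [set g : 'I_p.+1 | [forall d : 'I_p.+1, (d <= r) ==> (g + d \in W)%R]].

Lemma card_arc_starts W r : W != setT -> #|arc_starts W r| <= #|W| - r.
Proof.
move=> W_proper; set G := arc_starts W r.
have [->|[g0 g0G]] := set_0Vmem G; first by rewrite cards0.
(* A i = G + [0, i] stays inside W for i <= r and grows strictly with i, since
   a nonempty proper subset of the cycle is not closed under successor. *)
pose A (i : nat) := [set (g + d)%R | g : 'I_p.+1 in G, d : 'I_p.+1 in [set d : 'I_p.+1 | d <= i]].
have sAW i : i <= r -> A i \subset W.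
  move=> le_ir; apply/subsetP => x /imset2P[g d gG]; rewrite inE => le_di ->.
  by move: gG; rewrite inE => /forallP/(_ d); rewrite (leq_trans le_di le_ir).
have sAS i : A i \subset A i.+1.
  apply/subsetP => x /imset2P[g d gG]; rewrite inE => le_di ->.
  by apply: imset2_f; rewrite // inE ltnW.
have growA i : i < r -> #|A i| < #|A i.+1|.
  move=> lt_ir; apply: proper_card; apply/properP; split=> //.
  have [x xA x1nA] : exists2 x, x \in A i & (x + Zp1)%R \notin A i.
    apply/exists_inP; move: W_proper; apply: contraNT => /exists_inPn succA.
    rewrite -subTset -(@Zp_succ_closed (A i) (g0 + 0)%R); first exact: sAW (ltnW lt_ir).
      by apply/imset2P; exists g0 0%R; rewrite // inE.
    by move=> x /succA; rewrite negbK.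
  exists (x + Zp1)%R => //; case/imset2P: xA => g d gG; rewrite inE => le_di ->.
  by rewrite -addrA; apply: imset2_f; rewrite // inE (leq_trans (leq_val_addZp1 d)).
have cardA i : i <= r -> #|G| + i <= #|A i|.
  elim: i => [|i IHi] le_ir.
    rewrite addn0 subset_leq_card //; apply/subsetP => g gG.
    by apply/imset2P; exists g 0%R; rewrite // ?inE ?addr0.
  by have := IHi (ltnW le_ir); have := growA i le_ir; lia.
rewrite -(addnK r #|G|) leq_sub2r //.
exact: leq_trans (cardA r (leqnn r)) (subset_leq_card (sAW r (leqnn r))).
Qed.

End CyclicArcs.

Section CyclicCode.

Variables n p t r : nat.
Hypotheses (t_gt0 : 0 < t) (tm_le_n : t * p.+1 <= n).

(* File x < t * p.+1 lies in block x %/ t, and server s stores block g iff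
   s - g is in [0, r] modulo p.+1; [block x] is junk for the other files, which
   every server stores. *)
Definition block (x : 'I_n) : 'I_p.+1 := inord (x %/ t).

Definition cyclic_server (s : 'I_p.+1) : {set 'I_n} :=
  [set x : 'I_n | (t * p.+1 <= x) || (val (s - block x)%R <= r)].

Lemma block_file_subproof (g : 'I_p.+1) (c : 'I_t) : g * t + c < n.
Proof. by have := ltn_ord g; have := ltn_ord c; nia. Qed.

Definition block_file (gc : 'I_p.+1 * 'I_t) : 'I_n :=
  Ordinal (block_file_subproof gc.1 gc.2).

Lemma block_fileK g c : block (block_file (g, c)) = g.
Proof. by apply: val_inj; rewrite /block /= divnMDl // divn_small // addn0 inordK. Qed.

Lemma block_file_inj : injective block_file.
Proof.
move=> [g c] [g' c'] eq_gc; have := block_fileK g c; rewrite eq_gc block_fileK => <-.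
have /(congr1 (modn^~ t)) := congr1 val eq_gc; rewrite /= !modnMDl !modn_small //.
by move/val_inj->.
Qed.

Lemma card_block_files (A : {set 'I_p.+1}) :
  #|[set x : 'I_n | (x < t * p.+1) && (block x \in A)]| = #|A| * t.
Proof.
rewrite -[t in RHS]card_ord -cardsT -cardsX -(card_imset _ block_file_inj).
apply: eq_card => x; rewrite inE; apply/andP/imsetP => [[lt_x Px]|[[g c]]].
  have lt_div : x %/ t < p.+1 by rewrite ltn_divLR // mulnC.
  exists (block x, Ordinal (ltn_pmod x t_gt0)); first by rewrite !inE Px.
  by apply: val_inj; rewrite /= inordK // -divn_eq.
rewrite !inE andbT => gA ->; rewrite block_fileK; split=> //=.
by have := ltn_ord g; have := ltn_ord c; nia.
Qed.

Lemma card_cyclic_server s : r <= p -> #|cyclic_server s| = n - t * (p - r).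
Proof.
move=> le_rp.
have far_blocks : #|[set g : 'I_p.+1 | r < val (s - g)%R]| = p - r.
  have -> : [set g : 'I_p.+1 | r < val (s - g)%R] =
            [set (s - d)%R | d : 'I_p.+1 in ~: [set d : 'I_p.+1 | d <= r]].
    apply/setP => g; rewrite inE; apply/idP/imsetP => [lt_rg|[d]].
      by exists (s - g)%R; rewrite ?inE -?ltnNge // opprB addrC subrK.
    by rewrite !inE -ltnNge => lt_rd ->; rewrite opprB addrC subrK.
  rewrite card_imset; last exact: inj_comp (addrI s) (@oppr_inj _).
  by have := cardsC [set d : 'I_p.+1 | d <= r]; rewrite card_ord_leq // card_ord; lia.
have := cardsC (cyclic_server s); rewrite card_ord.
have -> : #|~: cyclic_server s| = (p - r) * t.
  rewrite -far_blocks -card_block_files; apply: eq_card => x.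
  by rewrite !inE negb_or -!ltnNge.
rewrite mulnC; lia.
Qed.

Lemma cyclic_server_hall (X Y : {set 'I_n}) (J : {set 'I_p.+1}) :
  #|X| <= t * (p.+1 - r) -> p.+1 - r <= #|J| -> Y \subset X ->
  #|Y| <= #|hitting_servers cyclic_server J Y| * t.
Proof.
move=> le_X le_J sYX; set T := hitting_servers cyclic_server J Y.
have [le_JT|lt_TJ] := leqP (p.+1 - r) #|T|.
  by rewrite mulnC (leq_trans (subset_leq_card sYX)) // (leq_trans le_X) ?leq_mul.
have Y_blocks x : x \in Y -> x < t * p.+1.
  move=> xY; rewrite ltnNge; apply: contraL lt_TJ => le_x.
  rewrite -leqNgt (leq_trans le_J) // subset_leq_card //; apply/subsetP => j jJ.
  by rewrite inE jJ; apply/exists_inP; exists x; rewrite // inE le_x.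
pose W := T :|: ~: J.
have le_W : #|W| <= #|T| + r.
  have le_CJ : #|~: J| <= r by have := cardsC J; rewrite card_ord; lia.
  by apply: leq_trans (leq_card_setU T (~: J)).1 _; rewrite leq_add2l.
have W_proper : W != setT.
  by apply: contraTneq le_W => ->; rewrite cardsT card_ord; lia.
have sY : Y \subset [set x : 'I_n | (x < t * p.+1) && (block x \in arc_starts W r)].
  apply/subsetP => x xY; rewrite inE Y_blocks //= inE; apply/forallP => d; apply/implyP => le_dr.
  rewrite !inE orbC; case: (boolP (_ \in J)) => //= jJ; apply/exists_inP; exists x => //.
  by rewrite inE addrC addKr le_dr orbT.
by rewrite (leq_trans (subset_leq_card sY)) // card_block_files leq_mul2r
  (leq_trans (card_arc_starts r W_proper)) ?orbT // leq_subLR addnC.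
Qed.

Lemma storage_cyclic_code : r <= p -> storage cyclic_server = p.+1 * (n - t * (p - r)).
Proof.
move=> le_rp; rewrite /storage (eq_bigr _ (fun s _ => card_cyclic_server s le_rp)).
by rewrite sum_nat_const card_ord.
Qed.

Lemma cyclic_code_ecbc k : k <= t * (p.+1 - r) -> is_ECBC k t r cyclic_server.
Proof.
move=> le_k X J le_Xk le_J; apply: (capacitated_cover ord0 t_gt0) => Y sYX.
exact: cyclic_server_hall (leq_trans le_Xk le_k) le_J sYX.
Qed.

End CyclicCode.

Lemma leq_ceil_div k t : 0 < t -> k <= t * ceil_div k t.
Proof.
move=> t_gt0; rewrite /ceil_div.
by have := divn_eq (k + t.-1) t; have := ltn_pmod (k + t.-1) t_gt0; lia.
Qed.

Lemma ceil_div_pred_lt k t : 0 < k -> t * (ceil_div k t - 1) < k.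
Proof.
move=> k_gt0; rewrite /ceil_div mulnBr muln1 mulnC.
by have := leq_divM (k + t.-1) t; lia.
Qed.

Theorem theorem6 (n m k t r : nat) :
  1 <= n -> 1 <= m -> 1 <= k -> 1 <= t ->
  m = ceil_div k t + r -> t * m <= n ->
  is_min_storage n m k t r (m * (n - t * (m - r - 1))) /\
  m * (n - t * (m - r - 1)) = t * m * (r + 1) + m * (n - t * m).
Proof.
move=> _ m_gt0 k_gt0 t_gt0 def_m le_tm_n.
have le_k : k <= t * (m - r) by rewrite def_m addnK leq_ceil_div.
have lt_k : t * (m - r - 1) < k by rewrite def_m addnK ceil_div_pred_lt.
have lt_rm : r < m.
  by have := leq_trans k_gt0 le_k; rewrite muln_gt0 subn_gt0 => /andP[].
split.
  split=> [|S ecbcS]; last exact: ecbc_storage_lower_bound ecbcS lt_k lt_rm.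
  case: m m_gt0 def_m le_tm_n le_k lt_k lt_rm => // p _ _ le_tm_n le_k _ lt_rp.
  exists (cyclic_server n t r); split; first exact: cyclic_code_ecbc.
  by rewrite storage_cyclic_code // subnAC subn1.
have split_tm : t * m = t * (m - r - 1) + t * (r + 1).
  by rewrite -mulnDr; congr (_ * _); lia.
by rewrite mulnAC [_ * m]mulnC -mulnDr; congr (m * _); lia.
Qed.
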